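(* Let $\delta:G_0\to G_1$ be an open continuous homomorphism of profinite groups with finite kernel. Let $H$ be a closed subgroup of $G_1$ and $\rho:H\to G_0$ a continuous homomorphism with $\delta\circ\rho$ equal to the inclusion $H\hookrightarrow G_1$. Then there exist an open subgroup $U\subset G_1$ containing $H$ and a continuous homomorphism $\rho':U\to G_0$ such that $\rho'|_H=\rho$ and $\delta\circ\rho'$ is the inclusion $U\hookrightarrow G_1$. *)

From Stdlib Require Import List.

Set Implicit Arguments.

Record TopGroup := {
  tg_car :> Type;
  tg_mul : tg_car -> tg_car -> tg_car;
  tg_one : tg_car;
  tg_inv : tg_car -> tg_car;
  tg_open : (tg_car -> Prop) -> Prop;
  tg_mulA : forall x y z, tg_mul x (tg_mul y z) = tg_mul (tg_mul x y) z;
  tg_mul1g : forall x, tg_mul tg_one x = x;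
  tg_mulVg : forall x, tg_mul (tg_inv x) x = tg_one;
  tg_open_full : tg_open (fun _ => True);
  tg_open_union : forall F : (tg_car -> Prop) -> Prop,
      (forall U, F U -> tg_open U) -> tg_open (fun x => exists U, F U /\ U x);
  tg_open_inter : forall U V, tg_open U -> tg_open V ->
      tg_open (fun x => U x /\ V x);
  tg_mul_cont : forall W x y, tg_open W -> W (tg_mul x y) ->
      exists U V, tg_open U /\ tg_open V /\ U x /\ V y /\
        (forall a b, U a -> V b -> W (tg_mul a b));
  tg_inv_cont : forall W, tg_open W -> tg_open (fun x => W (tg_inv x))
}.

Arguments tg_mul {t}.
Arguments tg_one {t}.
Arguments tg_inv {t}.
Arguments tg_open {t}.

Definition compact (G : TopGroup) : Prop :=
  forall F : (G -> Prop) -> Prop,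
    (forall U, F U -> tg_open U) ->
    (forall x : G, exists U, F U /\ U x) ->
    exists l : list (G -> Prop),
      (forall U, In U l -> F U) /\ (forall x : G, exists U, In U l /\ U x).

Definition hausdorff (G : TopGroup) : Prop :=
  forall x y : G, x <> y ->
    exists U V, tg_open U /\ tg_open V /\ U x /\ V y /\
      (forall z, U z -> V z -> False).

Definition connected_subset {G : TopGroup} (S : G -> Prop) : Prop :=
  ~ exists U V, tg_open U /\ tg_open V /\
      (forall x, S x -> U x \/ V x) /\
      (exists x, S x /\ U x) /\ (exists x, S x /\ V x) /\
      (forall x, S x -> U x -> V x -> False).

Definition totally_disconnected (G : TopGroup) : Prop :=
  forall S : G -> Prop, connected_subset S ->
    forall x y, S x -> S y -> x = y.

Definition profinite (G : TopGroup) : Prop :=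
  compact G /\ hausdorff G /\ totally_disconnected G.

Definition subgroup {G : TopGroup} (H : G -> Prop) : Prop :=
  H tg_one /\ (forall x y, H x -> H y -> H (tg_mul x y)) /\
  (forall x, H x -> H (tg_inv x)).

Definition closed_subgroup {G : TopGroup} (H : G -> Prop) : Prop :=
  subgroup H /\ tg_open (fun x => ~ H x).

Definition open_subgroup {G : TopGroup} (H : G -> Prop) : Prop :=
  subgroup H /\ tg_open H.

Definition continuous {G K : TopGroup} (f : G -> K) : Prop :=
  forall W, tg_open W -> tg_open (fun x => W (f x)).

Definition open_map {G K : TopGroup} (f : G -> K) : Prop :=
  forall U, tg_open U -> tg_open (fun y => exists x, U x /\ f x = y).

Definition homomorphism {G K : TopGroup} (f : G -> K) : Prop :=
  forall x y, f (tg_mul x y) = tg_mul (f x) (f y).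

Definition finite_kernel {G K : TopGroup} (f : G -> K) : Prop :=
  exists l : list G, forall x, f x = tg_one -> In x l.

(* A map H -> K defined on a subgroup H of G, represented by a total function
   f : G -> K of which only the values on H matter.  It is a continuous
   homomorphism for the subspace topology on H. *)
Definition hom_on {G K : TopGroup} (H : G -> Prop) (f : G -> K) : Prop :=
  forall x y, H x -> H y -> f (tg_mul x y) = tg_mul (f x) (f y).

Definition continuous_on {G K : TopGroup} (H : G -> Prop) (f : G -> K) : Prop :=
  forall W, tg_open W ->
    exists O, tg_open O /\ (forall x, H x -> (W (f x) <-> O x)).

From Stdlib Require Import List Classical.
From Stdlib Require Import FunctionalExtensionality PropExtensionality ClassicalEpsilon.

(* Choose an open normal subgroup N of G0 meeting the finite kernel of delta only
   in 1, and then an open normal N' inside N so small that rho maps the elements of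
   H lying in delta(N') into N (continuity of rho).  The open subgroup W = rho(H) N'
   then meets ker delta trivially, so delta maps W isomorphically onto the open
   subgroup U = delta(W) containing H, and rho' is the inverse of delta on W.
   Small open normal subgroups exist because a profinite group has a basis of
   clopen neighbourhoods of 1 (quasi-components of a compact Hausdorff space are
   connected, hence points), every clopen neighbourhood of 1 contains an open
   subgroup, and an open subgroup has only finitely many conjugates. *)

Set Implicit Arguments.
Unset Strict Implicit.

Local Notation "x ** y" := (tg_mul x y) (at level 40, left associativity).
Local Notation one := tg_one.
Local Notation inv := tg_inv.

Section Group.
Variable G : TopGroup.

Lemma mulA (x y z : G) : x ** (y ** z) = x ** y ** z.
Proof. apply tg_mulA. Qed.

Lemma mul1g (x : G) : one ** x = x.
Proof. apply tg_mul1g. Qed.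

Lemma mulVg (x : G) : inv x ** x = one.
Proof. apply tg_mulVg. Qed.

Lemma mulgV (x : G) : x ** inv x = one.
Proof.
  transitivity ((inv (inv x) ** inv x) ** (x ** inv x)).
  - rewrite mulVg, mul1g. reflexivity.
  - rewrite <- mulA, (mulA (inv x) x), mulVg, mul1g, mulVg. reflexivity.
Qed.

Lemma mulg1 (x : G) : x ** one = x.
Proof. rewrite <- (mulVg x), mulA, mulgV, mul1g. reflexivity. Qed.

Lemma mulKg (x y : G) : inv x ** (x ** y) = y.
Proof. rewrite mulA, mulVg, mul1g. reflexivity. Qed.

Lemma mulKVg (x y : G) : x ** (inv x ** y) = y.
Proof. rewrite mulA, mulgV, mul1g. reflexivity. Qed.

Lemma mulg_cancel (x y z : G) : x ** y = x ** z -> y = z.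
Proof. intro E. rewrite <- (mulKg x y), E, mulKg. reflexivity. Qed.

Lemma inv_uniq (x y : G) : x ** y = one -> y = inv x.
Proof. intro E. apply (mulg_cancel (x := x)). rewrite E, mulgV. reflexivity. Qed.

Lemma invgK (x : G) : inv (inv x) = x.
Proof. symmetry. apply inv_uniq, mulVg. Qed.

Lemma invgM (x y : G) : inv (x ** y) = inv y ** inv x.
Proof.
  symmetry. apply inv_uniq.
  rewrite <- mulA, (mulA y), mulgV, mul1g, mulgV. reflexivity.
Qed.

Lemma invg1 : inv one = one :> G.
Proof. symmetry. apply inv_uniq, mul1g. Qed.

Lemma eq_of_mulVg1 (x y : G) : inv x ** y = one -> x = y.
Proof. intro E. apply inv_uniq in E. rewrite invgK in E. auto. Qed.

Lemma idem_one (x : G) : x = x ** x -> x = one.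
Proof. intro E. symmetry. apply (mulg_cancel (x := x)). rewrite mulg1. auto. Qed.

End Group.

#[local] Hint Rewrite invgM invgK mulKg mulKVg mulVg mulgV mul1g mulg1 invg1 : grp.
#[local] Hint Rewrite <- mulA : grp.
Ltac grp := autorewrite with grp; try reflexivity.

Section Morphism.
Variables G K : TopGroup.
Variable f : G -> K.

Lemma hom_on_one (H : G -> Prop) : H one -> hom_on H f -> f one = one.
Proof. intros H1 hf. apply idem_one. rewrite <- hf, mul1g; auto. Qed.

Lemma hom_on_inv (H : G -> Prop) : subgroup H -> hom_on H f ->
  forall x, H x -> f (inv x) = inv (f x).
Proof.
  intros [H1 [HM HV]] hf x Hx. apply inv_uniq.
  rewrite <- hf, mulgV by auto. apply (hom_on_one H1 hf).
Qed.

Lemma hom_on_hom (H : G -> Prop) : homomorphism f -> hom_on H f.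
Proof. intros hf x y _ _. apply hf. Qed.

Lemma hom_one : homomorphism f -> f one = one.
Proof. intro hf. apply (hom_on_one (H := fun _ => True)); auto using hom_on_hom. Qed.

Lemma hom_inv : homomorphism f -> forall x, f (inv x) = inv (f x).
Proof.
  intros hf x. apply (hom_on_inv (H := fun _ => True)); auto using hom_on_hom.
  repeat split.
Qed.

Lemma hom_inj_on (W : G -> Prop) : homomorphism f -> subgroup W ->
  (forall x, W x -> f x = one -> x = one) ->
  forall x y, W x -> W y -> f x = f y -> x = y.
Proof.
  intros hf [W1 [WM WV]] kerW x y Wx Wy fxy. apply eq_of_mulVg1, kerW; auto.
  rewrite hf, hom_inv, fxy, mulVg; auto.
Qed.

End Morphism.

Section Topology.
Variable G : TopGroup.
Local Notation opn := (@tg_open G).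

Lemma open_ext (P Q : G -> Prop) : (forall x, P x <-> Q x) -> opn P -> opn Q.
Proof.
  intros E HP. replace Q with P; auto.
  apply functional_extensionality; intro x; apply propositional_extensionality; auto.
Qed.

Lemma open_union (Q : (G -> Prop) -> Prop) :
  opn (fun y => exists U, opn U /\ Q U /\ U y).
Proof.
  eapply open_ext; [| apply (tg_open_union G (fun U => opn U /\ Q U)); tauto].
  intro x; split; intros [U HU]; exists U; tauto.
Qed.

Lemma open_local (P : G -> Prop) :
  (forall x, P x -> exists U, opn U /\ U x /\ forall y, U y -> P y) -> opn P.
Proof.
  intro HP. eapply open_ext; [| apply (open_union (fun U => forall y, U y -> P y))].
  intro x; split.
  - intros [U [? [? ?]]]; auto.
  - intro Px. destruct (HP x Px) as [U [? [? ?]]]. exists U; auto.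
Qed.

Lemma open_and (U V : G -> Prop) : opn U -> opn V -> opn (fun x => U x /\ V x).
Proof. apply tg_open_inter. Qed.

Lemma open_or (U V : G -> Prop) : opn U -> opn V -> opn (fun x => U x \/ V x).
Proof.
  intros HU HV. apply open_local. intros x [Ux|Vx]; [exists U | exists V]; auto.
Qed.

Lemma open_list_inter (A : Type) (l : list A) (P : A -> Prop) (f : A -> G -> Prop) :
  (forall a, In a l -> P a -> opn (f a)) ->
  opn (fun x => forall a, In a l -> P a -> f a x).
Proof.
  induction l as [|a l IH]; intro Hf.
  - eapply open_ext; [| apply tg_open_full]. simpl; tauto.
  - assert (Hl : opn (fun x => forall b, In b l -> P b -> f b x)).
    { apply IH. intros b Hb. apply Hf. simpl; auto. }
    destruct (classic (P a)) as [Pa|nPa].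
    + eapply open_ext; [| apply (open_and (Hf a (or_introl eq_refl) Pa) Hl)].
      intro x; simpl; split.
      * intros [? ?] b [<-|Hb]; auto.
      * intro Hx; split; auto.
    + eapply open_ext; [| apply Hl].
      intro x; simpl; split; [intros Hx b [<-|Hb] Pb; [contradiction | auto] | auto].
Qed.

Lemma open_transl (U : G -> Prop) (a : G) : opn U -> opn (fun y => U (a ** y)).
Proof.
  intro HU. apply open_local. intros y Hy.
  destruct (tg_mul_cont G U a y HU Hy) as [A [B [_ [HB [Aa [By HAB]]]]]].
  exists B; auto.
Qed.

Lemma open_transr (U : G -> Prop) (a : G) : opn U -> opn (fun y => U (y ** a)).
Proof.
  intro HU. apply open_local. intros y Hy.
  destruct (tg_mul_cont G U y a HU Hy) as [A [B [HA [_ [Ay [Ba HAB]]]]]].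
  exists A; auto.
Qed.

Definition clopen (C : G -> Prop) := opn C /\ opn (fun y => ~ C y).

Lemma compact_closed_cover (C : G -> Prop) : compact G -> opn (fun y => ~ C y) ->
  forall F : (G -> Prop) -> Prop, (forall U, F U -> opn U) ->
  (forall x, C x -> exists U, F U /\ U x) ->
  exists l : list (G -> Prop), forall x, C x -> exists U, In U l /\ F U /\ U x.
Proof.
  intros cG hC F HF Hcov.
  destruct (cG (fun U => F U \/ U = (fun y => ~ C y))) as [l [H1 H2]].
  - intros U [?| ->]; auto.
  - intro x. destruct (classic (C x)) as [Cx|nCx].
    + destruct (Hcov x Cx) as [U [? ?]]; eauto.
    + exists (fun y => ~ C y); auto.
  - exists l. intros x Cx. destruct (H2 x) as [U [HU Ux]].
    destruct (H1 U HU) as [FU| ->]; [eauto | contradiction].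
Qed.

Lemma compact_cover : compact G ->
  forall F : (G -> Prop) -> Prop, (forall U, F U -> opn U) ->
  (forall x, exists U, F U /\ U x) ->
  exists l : list (G -> Prop), forall x, exists U, In U l /\ F U /\ U x.
Proof.
  intros cG F HF Hc.
  destruct (compact_closed_cover (C := fun _ : G => True) cG) with (F := F) as [l Hl]; eauto.
  eapply open_ext; [| apply (tg_open_union G (fun _ => False))]; [|tauto].
  intro x; split; [intros [U [[] _]] | tauto].
Qed.

Lemma separate_closed_of_pointwise (A B : G -> Prop) : compact G ->
  opn (fun y => ~ A y) ->
  (forall a, A a -> exists U V, opn U /\ opn V /\ U a /\ (forall b, B b -> V b) /\
     (forall z, U z -> V z -> False)) ->
  exists U V, opn U /\ opn V /\ (forall a, A a -> U a) /\ (forall b, B b -> V b) /\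
    (forall z, U z -> V z -> False).
Proof.
  intros cG hA sepA.
  set (F := fun W => opn W /\ exists V, opn V /\ (forall b, B b -> V b) /\
                       (forall z, W z -> V z -> False)).
  destruct (compact_closed_cover (F := F) cG hA) as [l Hl].
  - intros U [? _]; auto.
  - intros a Aa. destruct (sepA a Aa) as [U [V [? [? [? [? ?]]]]]].
    exists U. split; [split; [|exists V]|]; auto.
  - exists (fun y => exists W, In W l /\ F W /\ W y).
    exists (fun y => forall W, In W l -> F W -> exists V, opn V /\ (forall b, B b -> V b) /\
                (forall z, W z -> V z -> False) /\ V y).
    split; [|split; [|split; [|split]]].
    + apply open_local. intros y [W [? [[HW FW] ?]]]. exists W.
      split; [|split]; auto. intros z Wz. exists W. split; [|split]; [| split |]; auto.
    + apply open_list_inter. intros W _ _.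
      eapply open_ext; [| apply (open_union (fun V => (forall b, B b -> V b) /\
                                                   (forall z, W z -> V z -> False)))].
      intro y; split; intros [U HU]; exists U; tauto.
    + intros a Aa. destruct (Hl a Aa) as [W [? [? ?]]]. eauto.
    + intros b Bb W _ [_ [V [? [? ?]]]]. exists V; auto.
    + intros z [W [HW [FW Wz]]] HV. destruct (HV W HW FW) as [V [_ [_ [HWV Vz]]]]. eauto.
Qed.

Lemma separate_point_closed (B : G -> Prop) (a : G) : compact G -> hausdorff G ->
  opn (fun y => ~ B y) -> ~ B a ->
  exists U V, opn U /\ opn V /\ U a /\ (forall b, B b -> V b) /\
    (forall z, U z -> V z -> False).
Proof.
  intros cG hG hB nBa.
  destruct (separate_closed_of_pointwise (B := eq a) cG hB) as [V [U [? [? [? [Ua ?]]]]]].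
  - intros b Bb. destruct (hG b a) as [V [U [? [? [? [? ?]]]]]];
      [intros ->; contradiction|].
    exists V, U. repeat split; auto. intros ? <-; auto.
  - exists U, V. repeat split; eauto.
Qed.

Lemma separate_closed (A B : G -> Prop) : compact G -> hausdorff G ->
  opn (fun y => ~ A y) -> opn (fun y => ~ B y) -> (forall x, A x -> B x -> False) ->
  exists U V, opn U /\ opn V /\ (forall a, A a -> U a) /\ (forall b, B b -> V b) /\
    (forall z, U z -> V z -> False).
Proof.
  intros cG hG hA hB dAB. apply separate_closed_of_pointwise; auto.
  intros a Aa. apply separate_point_closed; eauto.
Qed.

End Topology.

Section ClopenBasis.
Variable G : TopGroup.
Local Notation opn := (@tg_open G).
Local Notation clopen := (@clopen G).

Definition quasi_component (x y : G) := forall C, clopen C -> C x -> C y.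

Lemma not_quasi_component x y : ~ quasi_component x y ->
  exists C, clopen C /\ C x /\ ~ C y.
Proof.
  intro nQy. apply not_all_ex_not in nQy as [C nQy]. exists C.
  apply imply_to_and in nQy as [HC nQy]. apply imply_to_and in nQy. tauto.
Qed.

Lemma quasi_component_closed x : opn (fun y => ~ quasi_component x y).
Proof.
  apply open_local. intros y nQy.
  destruct (not_quasi_component nQy) as [C [HC [Cx nCy]]].
  exists (fun z => ~ C z). split; [apply HC | split]; auto.
  intros z nCz Qz. apply nCz, Qz; auto.
Qed.

Definition complement_of_clopen_at (x : G) (W : G -> Prop) :=
  exists C, clopen C /\ C x /\ W = (fun y => ~ C y).

Lemma clopen_list_inter x l :
  let C := fun y => forall W, In W l -> complement_of_clopen_at x W -> ~ W y in
  clopen C /\ C x.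
Proof.
  split; [split|].
  - apply open_list_inter. intros W _ [C [[HC _] [_ ->]]].
    eapply open_ext; [| apply HC]. intro y; split; [tauto|apply NNPP].
  - apply open_local. intros y Hy.
    apply not_all_ex_not in Hy as [W Hy].
    apply imply_to_and in Hy as [HW Hy].
    apply imply_to_and in Hy as [FW Wy]. apply NNPP in Wy.
    destruct FW as [C [HCl [Cx EW]]].
    exists W. split; [subst W; apply HCl | split; auto].
    intros z Wz Hz. apply (Hz W HW); auto. exists C; auto.
  - intros W _ [C [_ [Cx ->]]]. tauto.
Qed.

Lemma clopen_in_open_around_quasi_component (O : G -> Prop) x : compact G -> opn O ->
  (forall y, quasi_component x y -> O y) ->
  exists C, clopen C /\ C x /\ forall y, C y -> O y.
Proof.
  intros cG oO QO.
  destruct (compact_cover (F := fun W => W = O \/ complement_of_clopen_at x W) cG) as [l Hl].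
  - intros W [->|[C [[_ HC] [_ ->]]]]; auto.
  - intro y. destruct (classic (quasi_component x y)) as [Qy|nQy].
    + exists O; auto.
    + destruct (not_quasi_component nQy) as [C [HC [Cx nCy]]].
      exists (fun y => ~ C y). split; [right; exists C|]; auto.
  - destruct (clopen_list_inter x l) as [HC Cx].
    eexists; split; [exact HC | split; [exact Cx|]].
    intros y Cy. destruct (Hl y) as [W [HW [[->|FW] Wy]]]; auto.
    exfalso; exact (Cy W HW FW Wy).
Qed.

Lemma clopen_inter_open_cover (C U V : G -> Prop) : clopen C -> opn U -> opn V ->
  (forall z, U z -> V z -> False) -> (forall y, C y -> U y \/ V y) ->
  clopen (fun y => C y /\ U y).
Proof.
  intros [oC cC] oU oV dUV CUV. split; [apply open_and; auto|].
  eapply open_ext; [| apply (open_or cC oV)]. intro y. split.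
  - intros [?|?] [? ?]; eauto.
  - intro nCU. destruct (classic (C y)) as [Cy|]; [|auto].
    right. destruct (CUV y Cy); tauto.
Qed.

Lemma quasi_component_one_side (U V : G -> Prop) x : compact G ->
  opn U -> opn V -> (forall z, U z -> V z -> False) ->
  (forall y, quasi_component x y -> U y \/ V y) -> U x ->
  forall y, quasi_component x y -> U y.
Proof.
  intros cG oU oV dUV QUV Ux y Qy.
  destruct (clopen_in_open_around_quasi_component (O := fun y => U y \/ V y) (x := x) cG)
    as [C [HC [Cx CUV]]]; auto using open_or.
  apply (Qy (fun y => C y /\ U y));
    [apply (clopen_inter_open_cover (U := U) (V := V)) | split]; auto.
Qed.

Lemma quasi_component_connected x : compact G -> hausdorff G ->
  connected_subset (quasi_component x).
Proof.
  intros cG hG [U [V [oU [oV [cov [[a [Qa Ua]] [[b [Qb Vb]] disj]]]]]]].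
  set (A := fun y => quasi_component x y /\ ~ V y).
  set (B := fun y => quasi_component x y /\ ~ U y).
  assert (closed_minus : forall W : G -> Prop, opn W ->
            opn (fun y => ~ (quasi_component x y /\ ~ W y))).
  { intros W oW. eapply open_ext; [| apply (open_or (quasi_component_closed x) oW)].
    intro y; split; [intros [?|?]; tauto|].
    intro nQW. apply not_and_or in nQW as [?|?]; [left | right; apply NNPP]; auto. }
  destruct (separate_closed (A := A) (B := B) cG hG (closed_minus V oV) (closed_minus U oU))
    as [U' [V' [oU' [oV' [AU' [BV' dU'V']]]]]].
  { intros y [Qy ?] [_ ?]. destruct (cov y Qy); auto. }
  assert (QUV : forall y, quasi_component x y -> U' y \/ V' y).
  { intros y Qy. destruct (cov y Qy) as [Uy|Vy].
    - left. apply AU'. split; [|intro]; eauto.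
    - right. apply BV'. split; [|intro]; eauto. }
  destruct (QUV x (fun C _ Cx => Cx)) as [U'x|V'x].
  - apply (dU'V' b); [eapply quasi_component_one_side; eauto|].
    apply BV'. split; [|intro]; eauto.
  - apply (dU'V' a); [|eapply (quasi_component_one_side (U := V') (V := U')); eauto].
    + apply AU'. split; [|intro]; eauto.
    + intros y Qy. destruct (QUV y Qy); auto.
Qed.

Lemma clopen_basis : profinite G ->
  forall (P : G -> Prop) x, opn P -> P x ->
  exists C, clopen C /\ C x /\ forall y, C y -> P y.
Proof.
  intros [cG [hG tG]] P x oP Px.
  apply clopen_in_open_around_quasi_component; auto.
  intros y Qy. replace y with x; auto.
  apply (tG _ (quasi_component_connected (x := x) cG hG)); auto. intros C _ Cx; auto.
Qed.

End ClopenBasis.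

Section OpenSubgroups.
Variable G : TopGroup.
Local Notation opn := (@tg_open G).

Definition normal (N : G -> Prop) := forall g x, N x -> N (inv g ** x ** g).

Inductive generated (N : G -> Prop) : G -> Prop :=
| generated1 : generated N one
| generatedM x n : generated N x -> N n -> generated N (x ** n).

Lemma generated_mul N x y : generated N x -> generated N y -> generated N (x ** y).
Proof.
  intros Hx Hy. induction Hy as [|y n Hy IH Hn].
  - rewrite mulg1; auto.
  - rewrite mulA. apply generatedM; auto.
Qed.

Lemma generated_inv N x : (forall n, N n -> N (inv n)) ->
  generated N x -> generated N (inv x).
Proof.
  intros NV Hx. induction Hx as [|x n Hx IH Hn].
  - rewrite invg1. apply generated1.
  - rewrite invgM. apply generated_mul; auto.
    rewrite <- (mul1g (inv n)). apply generatedM; [apply generated1 | auto].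
Qed.

Lemma open_subgroup_generated (N : G -> Prop) : opn N -> N one ->
  (forall n, N n -> N (inv n)) -> open_subgroup (generated N).
Proof.
  intros oN N1 NV. split; [split; [|split]|].
  - apply generated1.
  - apply generated_mul.
  - intros x Hx; apply generated_inv; auto.
  - apply open_local. intros x Hx.
    exists (fun y => N (inv x ** y)). split; [apply open_transl; auto | split].
    + rewrite mulVg; auto.
    + intros y Hy. rewrite <- (mulKVg x y). apply generatedM; auto.
Qed.

Lemma generated_in (C N : G -> Prop) : C one ->
  (forall v n, C v -> N n -> C (v ** n)) -> forall y, generated N y -> C y.
Proof. intros C1 CN y Hy. induction Hy; auto. Qed.

Lemma clopen_right_stable_nbhd (C : G -> Prop) : compact G -> clopen C ->
  exists N, opn N /\ N one /\ forall v n, C v -> N n -> C (v ** n).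
Proof.
  intros cG [oC cC].
  set (F := fun U => opn U /\ exists N, opn N /\ N one /\
                       (forall a b, U a -> N b -> C (a ** b))).
  destruct (compact_closed_cover (F := F) cG cC) as [l Hl].
  - intros U [? _]; auto.
  - intros v Cv. rewrite <- (mulg1 v) in Cv.
    destruct (tg_mul_cont G C v one oC Cv) as [A [B [? [? [? [? ?]]]]]].
    exists A. split; [split; [|exists B]|]; auto.
  - exists (fun y => forall U, In U l -> F U -> exists N, opn N /\ N one /\
                 (forall a b, U a -> N b -> C (a ** b)) /\ N y).
    split; [|split].
    + apply open_list_inter. intros U _ _.
      eapply open_ext; [| apply (open_union (fun N => N one /\
                                  (forall a b, U a -> N b -> C (a ** b))))].
      intro y; split; intros [N HN]; exists N; tauto.
    + intros U _ [_ [N [? [? ?]]]]. exists N; auto.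
    + intros v n Cv Nn. destruct (Hl v Cv) as [U [HU [FU Uv]]].
      destruct (Nn U HU FU) as [N [_ [_ [HN Nn']]]]. eauto.
Qed.

Lemma open_subgroup_in_clopen (C : G -> Prop) : compact G -> clopen C -> C one ->
  exists S, open_subgroup S /\ forall y, S y -> C y.
Proof.
  intros cG HC C1.
  destruct (clopen_right_stable_nbhd cG HC) as [N [oN [N1 CN]]].
  exists (generated (fun y => N y /\ N (inv y))). split.
  - apply open_subgroup_generated.
    + apply open_and; [|apply tg_inv_cont]; auto.
    + rewrite invg1; auto.
    + intros n [? ?]. rewrite invgK; auto.
  - apply generated_in; auto. intros v n Cv [Nn _]; auto.
Qed.

(* [N] is the intersection of all conjugates of [S]; since finitely many cosets [g S]
   cover [G], near any point only the conjugates by their representatives matter. *)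
Lemma normal_core (S : G -> Prop) : compact G -> open_subgroup S ->
  exists N, open_subgroup N /\ normal N /\ forall y, N y -> S y.
Proof.
  intros cG [[S1 [SM SV]] oS].
  set (F := fun W => exists g, W = fun y => S (inv g ** y)).
  destruct (compact_cover (F := F) cG) as [l Hl].
  - intros W [g ->]. apply open_transl; auto.
  - intro y. exists (fun z => S (inv y ** z)). split; [exists y | rewrite mulVg]; auto.
  - set (N := fun x => forall g, S (inv g ** x ** g)).
    exists N. split; [split; [split; [|split]|] | split].
    + intro g. grp. auto.
    + intros x y Hx Hy g.
      replace (inv g ** (x ** y) ** g) with ((inv g ** x ** g) ** (inv g ** y ** g)) by grp.
      apply SM; auto.
    + intros x Hx g. replace (inv g ** inv x ** g) with (inv (inv g ** x ** g)) by grp.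
      apply SV; auto.
    + apply open_local. intros x Nx.
      exists (fun y => forall W, In W l -> F W -> exists g,
                 W = (fun z => S (inv g ** z)) /\ S (inv g ** y ** g)).
      split; [|split].
      * apply open_list_inter. intros W _ _. apply open_local.
        intros y [g [EW Sy]]. exists (fun y => S (inv g ** y ** g)). split.
        -- apply (open_transl (U := fun w => S (w ** g))). apply open_transr; auto.
        -- split; auto. intros z Hz; exists g; auto.
      * intros W _ [g EW]. exists g; auto.
      * intros y Hy g. destruct (Hl g) as [W [HW [FW Wg]]].
        destruct (Hy W HW FW) as [g1 [EW Sy]]. rewrite EW in Wg.
        replace (inv g ** y ** g) with
          (inv (inv g1 ** g) ** (inv g1 ** y ** g1) ** (inv g1 ** g)) by grp.
        apply SM; [apply SM|]; auto.
    + intros h x Nx g.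
      replace (inv g ** (inv h ** x ** h) ** g) with (inv (h ** g) ** x ** (h ** g)) by grp.
      apply Nx.
    + intros y Ny. specialize (Ny one). revert Ny. grp. auto.
Qed.

Lemma open_normal_basis : profinite G -> forall P : G -> Prop, opn P -> P one ->
  exists N, open_subgroup N /\ normal N /\ forall y, N y -> P y.
Proof.
  intros pG P oP P1.
  destruct (clopen_basis pG oP P1) as [C [HC [C1 CP]]].
  destruct (open_subgroup_in_clopen (proj1 pG) HC C1) as [S [HS SC]].
  destruct (normal_core (proj1 pG) HS) as [N [HN [Nn NS]]].
  exists N. split; [|split]; auto.
Qed.

Lemma open_normal_avoiding (l : list G) : profinite G ->
  exists N, open_subgroup N /\ normal N /\ forall k, In k l -> N k -> k = one.
Proof.
  intro pG.
  set (P := fun y => forall k, In k l -> k <> one ->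
              exists U, opn U /\ ~ U k /\ U y).
  destruct (open_normal_basis (P := P) pG) as [N [HN [Nn NP]]].
  - apply open_list_inter. intros k _ _.
    eapply open_ext; [| apply (open_union (fun U => ~ U k))].
    intro y; split; intros [U HU]; exists U; tauto.
  - intros k _ nk. destruct (proj1 (proj2 pG) one k (fun e => nk (eq_sym e)))
      as [U [V [oU [_ [U1 [Vk dUV]]]]]].
    exists U. split; [|split]; eauto.
  - exists N. split; [|split]; auto. intros k Hk Nk. apply NNPP. intro nk.
    destruct (NP k Nk k Hk nk) as [U [_ [nUk Uk]]]. auto.
Qed.

End OpenSubgroups.

Section InverseOnSubgroup.
Variables G K : TopGroup.
Variable f : G -> K.
Hypothesis hf : homomorphism f.
Variable W : G -> Prop.
Hypothesis hW : open_subgroup W.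
Hypothesis kerW : forall x, W x -> f x = one -> x = one.

Definition image (y : K) := exists x, W x /\ f x = y.

Definition inverse_on (y : K) : G :=
  epsilon (inhabits one) (fun x => W x /\ f x = y).

Lemma inverse_onP y : image y -> W (inverse_on y) /\ f (inverse_on y) = y.
Proof. apply (epsilon_spec (inhabits one) (fun x => W x /\ f x = y)). Qed.

Let injW := hom_inj_on hf (proj1 hW) kerW.

Lemma inverse_on_eq x : W x -> inverse_on (f x) = x.
Proof.
  intro Wx. destruct (inverse_onP (y := f x)) as [Wi fi]; [exists x; auto|].
  apply injW; auto.
Qed.

Lemma image_open_subgroup : open_map f -> open_subgroup image.
Proof.
  destruct hW as [[W1 [WM WV]] oW]. intro of.
  split; [split; [|split]|].
  - exists one. split; [|apply hom_one]; auto.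
  - intros x y [a [Wa <-]] [b [Wb <-]]. exists (a ** b). split; auto.
  - intros x [a [Wa <-]]. exists (inv a). split; [|apply hom_inv]; auto.
  - apply of; auto.
Qed.

Lemma inverse_on_hom : hom_on image inverse_on.
Proof.
  intros u v Hu Hv.
  destruct (inverse_onP Hu) as [Wu <-]. destruct (inverse_onP Hv) as [Wv <-].
  rewrite <- hf, !inverse_on_eq; auto. apply hW; auto.
Qed.

Lemma inverse_on_continuous : open_map f -> continuous_on image inverse_on.
Proof.
  intros of Wo oWo. exists (fun y => exists x, (W x /\ Wo x) /\ f x = y).
  split; [apply of, open_and; [apply hW | auto]|].
  intros u Hu. destruct (inverse_onP Hu) as [Wu fu]. split.
  - intro Wou. exists (inverse_on u); auto.
  - intros [x [[Wx Wox] <-]]. rewrite inverse_on_eq; auto.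
Qed.

End InverseOnSubgroup.

Section Lifting.
Variables G0 G1 : TopGroup.
Variable delta : G0 -> G1.
Hypothesis hdelta : homomorphism delta.
Variable H : G1 -> Prop.
Hypothesis hH : subgroup H.
Variable rho : G1 -> G0.
Hypothesis hrho : hom_on H rho.
Hypothesis sec : forall h, H h -> delta (rho h) = h.

Definition section_times (N : G0 -> Prop) (x : G0) :=
  exists h n, H h /\ N n /\ x = rho h ** n.

Lemma section_times_open_subgroup (N : G0 -> Prop) : open_subgroup N -> normal N ->
  open_subgroup (section_times N) /\ forall h, H h -> section_times N (rho h).
Proof.
  destruct hH as [H1 [HM HV]]. intros [[N1 [NM NV]] oN] Nn.
  pose proof (hom_on_one H1 hrho) as rho1.
  pose proof (hom_on_inv hH hrho) as rhoV.
  split; [split; [split; [|split]|] |].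
  - exists one, one. rewrite rho1, mul1g. auto.
  - intros x y [h [n [Hh [Nn1 ->]]]] [h' [n' [Hh' [Nn' ->]]]].
    exists (h ** h'), (inv (rho h') ** n ** rho h' ** n').
    split; [|split]; auto. rewrite hrho; auto. grp.
  - intros x [h [n [Hh [Nn1 ->]]]].
    exists (inv h), (inv (inv (rho h)) ** inv n ** inv (rho h)).
    split; [|split]; auto. rewrite rhoV; auto. grp.
  - apply open_local. intros x [h [n [Hh [Nn1 ->]]]].
    exists (fun y => N (inv (rho h) ** y)). split; [apply open_transl; auto | split].
    + rewrite mulKg; auto.
    + intros y Hy. exists h, (inv (rho h) ** y). split; [|split]; auto. grp.
  - intros h Hh. exists h, one. rewrite mulg1. auto.
Qed.

(* [delta (rho h * n) = 1] forces [delta n = h^-1], so [n] and [rho (h^-1)] are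
   elements of [N] with the same image, hence equal. *)
Lemma section_times_trivial_kernel (N N' : G0 -> Prop) : subgroup N ->
  (forall x, N x -> delta x = one -> x = one) ->
  (forall n, N' n -> N n) -> (forall n, N' n -> H (delta n) -> N (rho (delta n))) ->
  forall x, section_times N' x -> delta x = one -> x = one.
Proof.
  destruct hH as [H1 [HM HV]]. intros [N1 [NM NV]] kerN N'N N'rho x [h [n [Hh [N'n ->]]]] dx.
  rewrite hdelta, sec in dx by auto.
  apply inv_uniq in dx.
  assert (Nrho : N (rho (inv h))) by (rewrite <- dx; apply N'rho; [|rewrite dx]; auto).
  assert (n_eq : rho (inv h) = n).
  { apply eq_of_mulVg1, kerN; auto.
    rewrite hdelta, hom_inv, sec, dx, mulVg; auto. }
  rewrite <- n_eq, <- hrho, mulgV by auto. apply (hom_on_one (H := H)); auto.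
Qed.

End Lifting.

Theorem lemma4p3 (G0 G1 : TopGroup) (pG0 : profinite G0) (pG1 : profinite G1)
  (delta : G0 -> G1)
  (hdelta : homomorphism delta) (cdelta : continuous delta)
  (odelta : open_map delta) (kdelta : finite_kernel delta)
  (H : G1 -> Prop) (hH : closed_subgroup H)
  (rho : G1 -> G0) (hrho : hom_on H rho) (crho : continuous_on H rho)
  (sec : forall h, H h -> delta (rho h) = h) :
  exists U : G1 -> Prop, open_subgroup U /\ (forall h, H h -> U h) /\
    exists rho' : G1 -> G0, hom_on U rho' /\ continuous_on U rho' /\
      (forall h, H h -> rho' h = rho h) /\
      (forall u, U u -> delta (rho' u) = u).
Proof.
  destruct kdelta as [ker Hker]. destruct hH as [sH _].
  destruct (open_normal_avoiding ker pG0) as [N [[sN oN] [_ kerN]]].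
  destruct (crho N oN) as [O [oO HO]].
  destruct (open_normal_basis (P := fun x => N x /\ O (delta x)) pG0) as [N' [HN' [nN' N'P]]].
  - apply open_and; [|apply cdelta]; auto.
  - split; [apply sN|]. rewrite hom_one by auto. apply HO; [apply sH|].
    rewrite (hom_on_one (H := H)); [apply sN | apply sH | auto].
  - set (W := section_times H rho N').
    destruct (section_times_open_subgroup sH hrho HN' nN') as [oW rhoW].
    assert (kerW : forall x, W x -> delta x = one -> x = one).
    { apply (section_times_trivial_kernel hdelta sH hrho sec sN);
        [intros x Nx dx; apply kerN; auto | apply N'P | intros n N'n Hd; apply HO, N'P; auto]. }
    exists (image delta W). split; [apply image_open_subgroup; auto | split].
    + intros h Hh. exists (rho h). split; [apply rhoW | apply sec]; auto.
    + exists (inverse_on delta W).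
      split; [apply inverse_on_hom; auto | split; [apply inverse_on_continuous; auto|split]].
      * intros h Hh. rewrite <- (sec h Hh) at 1. apply inverse_on_eq; [..|apply rhoW]; auto.
      * intros u Hu. apply (inverse_onP Hu).
Qed.
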